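(* Let $n\ge3$, let $\mathcal{U}=[k]$ be finite, let $\{\mathbf{p}_u\}_{u\in\mathcal{U}}$ be a probability table with every $\mathbf{p}_u\in(0,1)^n$ and $\sum_ip_u^{(i)}=1$, let $d$ be a probability distribution on $\mathcal{U}$, and let $E=\{(C^{(1)},C^{(2)}),(C^{(2)},C^{(3)}),\dots,(C^{(n-1)},C^{(n)}),(C^{(n)},C^{(1)})\}$. Then there exists a probability distribution $w$ on the set $\mathcal{R}$ of permutations of $[n]$ such that $f_d(e)=\sum_{r\in\mathcal{R}}w(r)f_r(e)$ for every $e\in E$.
   Context: $f_d(C^{(i)},C^{(j)})=\sum_u d(u)\,p_u^{(i)}/(p_u^{(i)}+p_u^{(j)})$ are the expert graph weights (here an expert cycle on $E$). For a permutation $r=(r_1,\dots,r_n)$, $f_r(C^{(r_a)},C^{(r_b)})=1$ if $a<b$ and $0$ if $a>b$ (ranking graph weights). *)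

From mathcomp Require Import all_boot all_order all_algebra all_fingroup.
From mathcomp Require Import reals.
Set Implicit Arguments. Unset Strict Implicit. Unset Printing Implicit Defensive.
Import Order.TTheory GRing.Theory Num.Theory.
Local Open Scope ring_scope.

(* Candidates C^(1..n) are indexed by 'I_n (0-based), users U = [k] by 'I_k. *)

Definition expert_weight (R : realType) (n k : nat) (p : 'I_k -> 'I_n -> R)
  (d : 'I_k -> R) (i j : 'I_n) : R :=
  \sum_(u < k) d u * (p u i / (p u i + p u j)).

(* Ranking graph weight of a permutation r = (r_1,...,r_n) (r maps positions
   to candidates): f_r(C^(r_a), C^(r_b)) = 1 if a < b, 0 if a > b. *)
Definition rank_weight (R : realType) (n : nat) (r : {perm 'I_n}) (x y : 'I_n) : R :=
  if ((r^-1)%g x < (r^-1)%g y)%N then 1 else 0.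

Definition cycle_edges (n : nat) : seq ('I_n * 'I_n) :=
  [seq (i, ordS i) | i <- enum 'I_n].
Arguments rank_weight R {n} r x y.

From mathcomp Require Import all_boot all_order all_algebra all_fingroup.
From mathcomp Require Import reals.
From mathcomp Require Import zify ring lra.
Import Order.TTheory GRing.Theory Num.Theory.
Local Open Scope ring_scope.
Set Implicit Arguments. Unset Strict Implicit. Unset Printing Implicit Defensive.

(** The expert weights along the cycle form the vector
    [x i = \sum_u d u * p u i / (p u i + p u (i+1))].  For each user the ratios lie
    in [[0, 1]], they sum to at least [\sum_i p u i = 1], and so do the complementary
    ratios; hence [x] lies in the polytope [0 <= x <= 1, 1 <= \sum x <= n - 1].  That
    polytope is the convex hull of the non-constant 0/1 vectors: a point with a
    fractional coordinate lies on a segment between two points of the polytope with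
    fewer fractional coordinates, obtained by pushing that coordinate alone, or it and
    a second fractional coordinate in opposite directions, until one of them reaches
    0 or 1.  Finally, every non-constant 0/1 vector on the cycle is the ascent pattern
    [i |-> r^-1 i < r^-1 (i+1)] of some ranking [r]. *)

Section CyclePatterns.
Variable n : nat.

Lemma perm_of_injective_key (key : 'I_n -> nat) : injective key ->
  exists r : {perm 'I_n}, forall u v, ((r^-1)%g u < (r^-1)%g v)%N = (key u < key v)%N.
Proof.
move=> key_inj.
pose below v := [set u | (key u < key v)%N].
have below_lt v : (#|below v| < n)%N.
  have : below v \proper [set: 'I_n].
    by apply/properP; split; [exact: subsetT | exists v; rewrite ?inE ?ltnn].
  by move/proper_card; rewrite cardsT card_ord.
have below_mono u v : (key u < key v)%N -> (#|below u| < #|below v|)%N.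
  move=> lt_uv; apply: proper_card; apply/properP; split; last by exists u; rewrite !inE ?ltnn.
  by apply/subsetP=> w; rewrite !inE => /ltn_trans; apply.
have below_le u v : (key v <= key u)%N -> (#|below v| <= #|below u|)%N.
  by move=> le_vu; apply/subset_leq_card/subsetP=> w; rewrite !inE => /leq_trans; apply.
pose pos v := Ordinal (below_lt v).
have posE u v : (pos u < pos v)%N = (key u < key v)%N.
  by case: (ltnP (key u) (key v)) => [/below_mono // | /below_le]; rewrite leqNgt => /negbTE.
have pos_inj : injective pos.
  move=> u v /(congr1 val) /= e; apply: key_inj.
  by case: (ltngtP (key u) (key v)) => // /below_mono; rewrite e ltnn.
by exists (perm pos_inj)^-1%g => u v; rewrite invgK !permE posE.
Qed.

Definition cyc_offset (s v : 'I_n) : nat := ((v + (n - s)) %% n)%N.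

Lemma cyc_offset_lt s v : (cyc_offset s v < n)%N.
Proof. by rewrite ltn_pmod // (leq_ltn_trans _ (ltn_ord v)). Qed.

Lemma cyc_offset_id s : cyc_offset s s = 0%N.
Proof. by rewrite /cyc_offset subnKC ?modnn // ltnW. Qed.

Lemma cyc_offsetS s v : cyc_offset s (ordS v) = ((cyc_offset s v).+1 %% n)%N.
Proof. by rewrite /cyc_offset /= !modnDml -[in RHS]addn1 modnDml addn1 addSn. Qed.

Lemma cyc_offset_inj s : injective (cyc_offset s).
Proof.
move=> u v /eqP; rewrite eqn_modDr => /eqP.
by rewrite !modn_small // => /val_inj.
Qed.

Lemma ordS_neq (i : 'I_n) : (1 < n)%N -> ordS i != i.
Proof.
move=> n_gt1; rewrite -val_eqE /=; have := ltn_ord i.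
by rewrite leq_eqVlt => /orP [/eqP e | /modn_small ->]; rewrite ?e ?modnn; lia.
Qed.

Lemma exists_ordS_switch (b : 'I_n -> bool) i j : b i != b j -> exists c, b (ordS c) != b c.
Proof.
case: n b i j => [|m] b i j; first by case: i.
move=> b_ij; have [a ba] : exists a, b a != b ord0.
  by case: (eqVneq (b i) (b ord0)) => [<-|]; [exists j; rewrite eq_sym | exists i].
have ex_m : exists m0, (m0 < m.+1)%N && (b (inord m0) != b ord0).
  by exists a; rewrite ltn_ord inord_val.
case: (ex_minnP ex_m) => m0 /andP [lt_m0 b_m0] min_m0.
have m0_gt0 : (0 < m0)%N.
  have inord0 : inord 0 = ord0 :> 'I_m.+1 by apply: val_inj; rewrite /= inordK.
  by case: m0 b_m0 {lt_m0 min_m0} => //; rewrite inord0 eqxx.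
exists (inord m0.-1).
have -> : ordS (inord m0.-1) = inord m0 :> 'I_m.+1.
  by apply: val_inj; rewrite /= !inordK ?prednK ?modn_small //; lia.
case: (eqVneq (b (inord m0.-1)) (b ord0)) => [-> // | b_pred].
by have := min_m0 m0.-1; rewrite b_pred andbT; lia.
Qed.

Lemma cycle_pattern_realizable (b : 'I_n -> bool) c : b (ordS c) != b c ->
  exists r : {perm 'I_n}, forall i, ((r^-1)%g i < (r^-1)%g (ordS i))%N = b i.
Proof.
move=> b_switch.
have n_gt1 : (1 < n)%N.
  case: (ltnP 1 n) => // n_le1; move: b_switch; have := ltn_ord c => lt_c.
  suff -> : ordS c = c by rewrite eqxx.
  by apply: val_inj => /=; rewrite (_ : c.+1 = n) ?modnn; lia.
(* Walking around the cycle from [s], the vertex at step [t] gets key [n + t] if it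
   is entered by an ascent and [n - t] otherwise, so it lies above or below all
   earlier keys; the closing edge into [s] (key [n]) points the right way because
   [b] switches at [ordS c]. *)
pose s := ordS (ordS c).
pose key v := if (cyc_offset s v == 0%N) || b (ord_pred v) then (n + cyc_offset s v)%N
              else (n - cyc_offset s v)%N.
have key_inj : injective key.
  move=> u v; rewrite /key; have := cyc_offset_lt s u; have := cyc_offset_lt s v.
  case: ifP => hu; case: ifP => hv => lt_v lt_u e; apply: (@cyc_offset_inj s).
  - lia.
  - by move: hv => /norP [/eqP hv _]; lia.
  - by move: hu => /norP [/eqP hu _]; lia.
  - lia.
have [r hr] := perm_of_injective_key key_inj.
exists r => i; rewrite hr /key cyc_offsetS ordSK.
have := cyc_offset_lt s i.
case: (ltngtP (cyc_offset s i).+1 n) => // h _.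
- by rewrite (modn_small h) /=; case: (b i); case: ifP => _; lia.
- have ei : i = ordS c.
    apply: ordS_inj; apply: (@cyc_offset_inj s).
    by rewrite cyc_offset_id cyc_offsetS h modnn.
  rewrite ei in h *; rewrite h modnn ordSK eqxx /=.
  have -> : cyc_offset s (ordS c) = n.-1 by lia.
  have -> : (n.-1 == 0)%N = false by apply/eqP; lia.
  by move: b_switch; case: (b (ordS c)); case: (b c) => //= _; lia.
Qed.

End CyclePatterns.

Lemma psum_fractional_term (R : realDomainType) (T : finType) (P : pred T) (f : T -> R) :
  (forall k, 0 <= f k) -> 0 < \sum_(k | P k) f k < 1 -> exists2 j, P j & 0 < f j < 1.
Proof.
move=> f_ge0 /andP [sum_gt0 sum_lt1].
have [j /andP [Pj fj_gt0]] : exists j, P j && (0 < f j).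
  apply/existsP; apply: contraTT sum_gt0; rewrite negb_exists -leNgt => /forallP f_le0.
  rewrite big1 // => k Pk; apply/eqP; rewrite eq_le f_ge0 andbT.
  by move: (f_le0 k); rewrite Pk /= -leNgt.
exists j; rewrite // fj_gt0 (le_lt_trans _ sum_lt1) //.
by rewrite (bigD1 j) //= lerDl sumr_ge0.
Qed.

Section CubeBand.
Variables (R : realFieldType) (n : nat).
Implicit Types x y : 'I_n -> R.

Definition cube_band x : Prop :=
  (forall k, 0 <= x k <= 1) /\ 1 <= \sum_k x k <= n%:R - 1.

Definition frac x : {set 'I_n} := [set k | 0 < x k < 1].

Lemma card_frac_lt x y s : (forall k, y k != x k -> k \in frac x) ->
  s \in frac x -> s \notin frac y -> (#|frac y| < #|frac x|)%N.
Proof.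
move=> moved_frac s_x s_y; apply: proper_card; apply/properP; split; last by exists s.
apply/subsetP => k; case: (eqVneq (y k) (x k)) => [yx | /moved_frac //].
by rewrite !inE yx.
Qed.

Definition upd x i (a : R) k := if k == i then a else x k.

Lemma sum_upd x i a : \sum_k upd x i a k = \sum_k x k - x i + a.
Proof.
rewrite (bigD1 i) //= [in RHS](bigD1 i) //= /upd eqxx.
rewrite (eq_bigr x) => [|k /negbTE -> //]; ring.
Qed.

Lemma cube_band_avg k (d : 'I_k -> R) (a : 'I_k -> 'I_n -> R) :
  (forall u, 0 <= d u) -> \sum_u d u = 1 -> (forall u, cube_band (a u)) ->
  cube_band (fun i => \sum_u d u * a u i).
Proof.
move=> d_ge0 d_sum a_band.
have a_box u i : 0 <= a u i <= 1 by case: (a_band u).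
have a_sum u : 1 <= \sum_i a u i <= n%:R - 1 by case: (a_band u).
split=> [i|]; apply/andP; split.
- by apply: sumr_ge0 => u _; have /andP [? _] := a_box u i; rewrite mulr_ge0.
- rewrite -d_sum; apply: ler_sum => u _; have /andP [_ ?] := a_box u i.
  by rewrite ler_piMr.
- rewrite exchange_big -[X in X <= _]d_sum; apply: ler_sum => u _ /=.
  by have /andP [? _] := a_sum u; rewrite -mulr_sumr ler_peMr.
- rewrite exchange_big -[X in _ <= X]mul1r -[X in X * _]d_sum mulr_suml.
  apply: ler_sum => u _ /=.
  by have /andP [_ ?] := a_sum u; rewrite -mulr_sumr ler_wpM2l.
Qed.

Lemma pair_ratio_band (q : 'I_n -> R) : (1 < n)%N -> (forall i, 0 < q i) -> \sum_i q i = 1 ->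
  cube_band (fun i => q i / (q i + q (ordS i))).
Proof.
move=> n_gt1 q_gt0 q_sum.
have q_ge0 i : 0 <= q i by rewrite ltW.
have den_gt0 i : 0 < q i + q (ordS i) by rewrite addr_gt0.
have den_le1 i : q i + q (ordS i) <= 1.
  rewrite -q_sum (bigD1 i) //= (bigD1 (ordS i)) ?ordS_neq //=.
  by rewrite addrA lerDl sumr_ge0.
have ratio_ge i : q i <= q i / (q i + q (ordS i)).
  by rewrite ler_pdivlMr // ler_piMr ?q_ge0 ?den_le1.
have compl_ge i : q (ordS i) <= 1 - q i / (q i + q (ordS i)).
  have -> : 1 - q i / (q i + q (ordS i)) = q (ordS i) / (q i + q (ordS i)).
    by field; rewrite gt_eqF.
  by rewrite ler_pdivlMr // ler_piMr ?q_ge0 ?den_le1.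
split=> [i|]; apply/andP; split.
- by rewrite divr_ge0 // ltW.
- by rewrite ler_pdivrMr // mul1r lerDl.
- by rewrite -q_sum; apply: ler_sum => i _; apply: ratio_ge.
- have shift_sum : \sum_i q (ordS i) = 1 by rewrite -q_sum [RHS](reindex_inj (@ordS_inj n)).
  apply: (@le_trans _ _ (\sum_i (1 - q (ordS i)))).
    by apply: ler_sum => i _; have := compl_ge i; lra.
  by rewrite sumrB sumr_const card_ord shift_sum.
Qed.

End CubeBand.

Section RankingMixtures.
Variables (R : realType) (n : nat).
Implicit Types (x y : 'I_n -> R) (r : {perm 'I_n}).

Definition ranking_mixture x : Prop :=
  exists w : {perm 'I_n} -> R,
    [/\ forall r, 0 <= w r, \sum_r w r = 1 &
        forall i, x i = \sum_r w r * rank_weight R r i (ordS i)].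

Lemma ranking_mixture_conv x y1 y2 (l : R) : 0 <= l <= 1 ->
  ranking_mixture y1 -> ranking_mixture y2 ->
  (forall i, x i = l * y1 i + (1 - l) * y2 i) -> ranking_mixture x.
Proof.
move=> /andP [l_ge0 l_le1] [w1 [w1_ge0 w1_sum w1_y]] [w2 [w2_ge0 w2_sum w2_y]] xE.
exists (fun r => l * w1 r + (1 - l) * w2 r); split.
- by move=> r; rewrite addr_ge0 // mulr_ge0 // subr_ge0.
- by rewrite big_split /= -!mulr_sumr w1_sum w2_sum !mulr1 addrC subrK.
- move=> i; rewrite xE w1_y w2_y !mulr_sumr -big_split /=.
  by apply: eq_bigr => r _; ring.
Qed.

Lemma ranking_mixture_nonconst x (b : 'I_n -> bool) i j :
  (forall k, x k = (b k)%:R) -> b i != b j -> ranking_mixture x.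
Proof.
move=> xE b_ij; have [c b_switch] := exists_ordS_switch b_ij.
have [r0 r0E] := cycle_pattern_realizable b_switch.
exists (fun r => (r == r0)%:R); split.
- by move=> r; rewrite ler0n.
- by rewrite (bigD1 r0) //= eqxx big1 ?addr0 // => r /negbTE ->.
- move=> k; rewrite (bigD1 r0) //= eqxx mul1r big1 ?addr0; last first.
    by move=> r /negbTE ->; rewrite mul0r.
  by rewrite xE /rank_weight r0E; case: (b k).
Qed.

Lemma cube_band_integral x : cube_band x -> frac x = set0 -> ranking_mixture x.
Proof.
move=> [x01 /andP [sum_ge1 sum_le]] frac0.
have x_bool k : x k = (x k == 1)%:R.
  have : k \notin frac x by rewrite frac0 inE.
  rewrite inE negb_and -!leNgt; have /andP [? ?] := x01 k.
  case/orP => ?; [have -> : x k = 0 by lra | have -> : x k = 1 by lra].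
    by rewrite eq_sym oner_eq0.
  by rewrite eqxx.
have [i xi1] : exists i, x i == 1.
  apply/existsP; apply: contraTT sum_ge1; rewrite negb_exists => /forallP x_ne1.
  by rewrite big1 ?ler10 // => k _; rewrite x_bool (negbTE (x_ne1 k)).
have [j xj0] : exists j, x j != 1.
  apply/existsP; apply: contraTT sum_le; rewrite negb_exists => /forallP x_eq1.
  rewrite (eq_bigr (fun _ => 1)) => [|k _]; last by rewrite x_bool (negPn (x_eq1 k)).
  by rewrite sumr_const card_ord -ltNge ltrBlDr ltrDl ltr01.
by apply: (ranking_mixture_nonconst x_bool (i := i) (j := j)); rewrite xi1 xj0.
Qed.

Section InductionStep.
Variable x : 'I_n -> R.
Hypothesis x_band : cube_band x.
Hypothesis IH : forall y, cube_band y -> (#|frac y| < #|frac x|)%N -> ranking_mixture y.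

Lemma mixture_split_step i : i \in frac x ->
  1 <= \sum_k x k - x i <= n%:R - 2 -> ranking_mixture x.
Proof.
rewrite inE => /andP [xi_gt0 xi_lt1] /andP [rest_ge1 rest_le].
have [x01 _] := x_band.
have upd_mixture a : (a = 0 \/ a = 1) -> ranking_mixture (upd x i a).
  move=> a01; apply: IH.
    split=> [k|]; last by rewrite sum_upd; apply/andP; split; case: a01 => ->; lra.
    by rewrite /upd; case: ifP => // _; case: a01 => ->; rewrite ?lexx ?ler01.
  apply: (card_frac_lt (s := i)); last by rewrite inE /upd eqxx; case: a01 => ->; rewrite ltxx ?andbF.
    by move=> k; rewrite /upd; case: (eqVneq k i) => [-> _|_]; rewrite ?eqxx ?inE ?xi_gt0.
  by rewrite inE xi_gt0.
apply: (ranking_mixture_conv (l := x i) _ (upd_mixture 1 (or_intror erefl))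
                               (upd_mixture 0 (or_introl erefl))).
- by rewrite !ltW.
- by move=> k; rewrite /upd; case: (eqVneq k i) => [->|_]; ring.
Qed.

Lemma mixture_pair_step i j : i != j -> i \in frac x -> j \in frac x -> ranking_mixture x.
Proof.
move=> ij frac_i frac_j; move: (frac_i) (frac_j).
rewrite !inE => /andP [xi_gt0 xi_lt1] /andP [xj_gt0 xj_lt1].
have [x01 sum_x] := x_band.
pose shift c := upd (upd x i (x i + c)) j (x j - c).
have shift_i c : shift c i = x i + c by rewrite /shift /upd (negbTE ij) eqxx.
have shift_j c : shift c j = x j - c by rewrite /shift /upd eqxx.
have shift_other c k : k != i -> k != j -> shift c k = x k.
  by move=> /negbTE ki /negbTE kj; rewrite /shift /upd ki kj.
have shift_mixture c s : s \in [:: i; j] -> shift c s \in [:: 0; 1] ->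
    0 <= x i + c <= 1 -> 0 <= x j - c <= 1 -> ranking_mixture (shift c).
  move=> s_ij shift_s band_i band_j; apply: IH.
    split=> [k|].
      case: (eqVneq k i) => [->|ki]; first by rewrite shift_i.
      by case: (eqVneq k j) => [->|kj]; rewrite ?shift_j ?shift_other.
    rewrite /shift !sum_upd [upd _ _ _ j]/upd eq_sym (negbTE ij).
    by have -> : \sum_k x k - x i + (x i + c) - x j + (x j - c) = \sum_k x k by ring.
  apply: (card_frac_lt (s := s)).
  - move=> k; case: (eqVneq k i) => [-> //|ki].
    by case: (eqVneq k j) => [-> //|kj]; rewrite shift_other ?eqxx.
  - by move: s_ij; rewrite mem_seq2 => /orP [] /eqP ->.
  - by move: shift_s; rewrite mem_seq2 inE => /orP [] /eqP ->; rewrite ltxx ?andbF.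
have [c1 c1_gt0 mix1] : exists2 c, 0 < c & ranking_mixture (shift c).
  case: (lerP (1 - x i) (x j)) => h; [exists (1 - x i) | exists (x j)]; try lra.
  - apply: (shift_mixture _ i); try (apply/andP; lra); first by rewrite mem_seq2 eqxx.
    by rewrite shift_i addrC subrK mem_seq2 eqxx orbT.
  - apply: (shift_mixture _ j); try (apply/andP; lra); first by rewrite mem_seq2 eqxx orbT.
    by rewrite shift_j subrr mem_seq2 eqxx.
have [c2 c2_gt0 mix2] : exists2 c, 0 < c & ranking_mixture (shift (- c)).
  case: (lerP (x i) (1 - x j)) => h; [exists (x i) | exists (1 - x j)]; try lra.
  - apply: (shift_mixture _ i); try (apply/andP; lra); first by rewrite mem_seq2 eqxx.
    by rewrite shift_i subrr mem_seq2 eqxx.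
  - apply: (shift_mixture _ j); try (apply/andP; lra); first by rewrite mem_seq2 eqxx orbT.
    by rewrite shift_j opprK addrC subrK mem_seq2 eqxx orbT.
have c_ne0 : c1 + c2 != 0 by rewrite gt_eqF ?addr_gt0.
apply: (ranking_mixture_conv (l := c2 / (c1 + c2)) _ mix1 mix2).
- apply/andP; split; first by rewrite divr_ge0 // ltW // addr_gt0.
  by rewrite ler_pdivrMr ?addr_gt0 //; lra.
- move=> k; case: (eqVneq k i) => [->|ki]; first by rewrite !shift_i; field.
  by case: (eqVneq k j) => [->|kj]; rewrite ?shift_j ?shift_other //; field.
Qed.
End InductionStep.

Lemma cube_band_mixture x : cube_band x -> ranking_mixture x.
Proof.
have [N] := ubnP #|frac x|; elim: N x => // N IHN x lt_frac x_band.
have IH y : cube_band y -> (#|frac y| < #|frac x|)%N -> ranking_mixture y.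
  by move=> y_band lt_y; apply: IHN => //; apply: leq_trans lt_y _.
have [frac0 | [i frac_i]] := set_0Vmem (frac x); first exact: cube_band_integral.
have [x01 /andP [sum_ge1 sum_le]] := x_band.
move: (frac_i); rewrite inE => /andP [xi_gt0 xi_lt1].
have sum_but_i (f : 'I_n -> R) : \sum_(k | k != i) f k = \sum_k f k - f i.
  by rewrite [in RHS](bigD1 i) //= addrC addrK.
have pair_with j : j != i -> 0 < x j < 1 -> ranking_mixture x.
  move=> ji frac_j; apply: (mixture_pair_step x_band IH (j := j) _ frac_i).
    by rewrite eq_sym.
  by rewrite inE.
case: (ltrP (\sum_k x k - x i) 1) => [rest_lt1 | rest_ge1].
  have x_ge0 k : 0 <= x k by case/andP: (x01 k).
  have [|j] := psum_fractional_term (P := fun k => k != i) x_ge0.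
    by rewrite sum_but_i; apply/andP; split; lra.
  exact: pair_with.
case: (ltrP (n%:R - 2) (\sum_k x k - x i)) => [rest_gt | rest_le].
  have compl_ge0 k : 0 <= 1 - x k by have /andP [_ ?] := x01 k; rewrite subr_ge0.
  have [|j ji /andP [? ?]] := psum_fractional_term (P := fun k => k != i) compl_ge0.
    by rewrite sum_but_i sumrB sumr_const card_ord; apply/andP; split; lra.
  by apply: (pair_with j ji); apply/andP; split; lra.
by apply: (mixture_split_step x_band IH frac_i); apply/andP.
Qed.
End RankingMixtures.

Unset Implicit Arguments.

Theorem lemma16 (R : realType) (n k : nat) (p : 'I_k -> 'I_n -> R) (d : 'I_k -> R) :
  (3 <= n)%N ->
  (forall u i, 0 < p u i < 1) ->
  (forall u, \sum_(i < n) p u i = 1) ->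
  (forall u, 0 <= d u) ->
  \sum_(u < k) d u = 1 ->
  exists w : {perm 'I_n} -> R,
    [/\ forall r, 0 <= w r,
        \sum_(r : {perm 'I_n}) w r = 1 &
        forall e, e \in cycle_edges n ->
          expert_weight p d e.1 e.2 = \sum_(r : {perm 'I_n}) w r * rank_weight R r e.1 e.2].
Proof.
move=> n_ge3 p01 p_sum d_ge0 d_sum.
have x_band : cube_band (fun i => expert_weight p d i (ordS i)).
  apply: cube_band_avg => // u; apply: pair_ratio_band => // [|i].
    exact: leq_trans n_ge3.
  by case/andP: (p01 u i).
have [w [w_ge0 w_sum w_x]] := cube_band_mixture x_band.
by exists w; split => // _ /mapP [i _ ->]; apply: w_x.
Qed.
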